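(* Let $(\mathcal A,r)$ be a population game, $\mathcal G=(\mathcal H,\boldsymbol\eta,W)$ an undirected connected community network, and $\mathbf f$ an imitation mechanism satisfying Assumption 1. Let $\mathbf x(t)$ be the solution of the network imitation dynamics with initial condition $\mathbf x(0)\in\mathcal X^\bullet$ and $\mathbf y(t)=\mathbf x(t)\mathbf 1$. Then (i) $\mathbf y(t)=\mathbf y(0)$ for all $t\ge0$; (ii) $\mathbf x(t)\in\mathcal X^\bullet$ for all $t\ge 0$.
   Context: Let $\mathcal A$ be a finite set of actions and $\mathcal Y=\{\mathbf y\in\mathbb R_+^{\mathcal A}:\mathbf 1^\top\mathbf y=1\}$. A population game $(\mathcal A,r)$ consists of reward functions $r_i:\mathcal Y\to\mathbb R$. A community network $\mathcal G=(\mathcal H,\boldsymbol\eta,W)$: finite set $\mathcal H$, $\boldsymbol\eta\in\mathbb R^{\mathcal H}$ with $\eta_h>0$, $\sum_h\eta_h=1$, and nonnegative $W\in\mathbb R_+^{\mathcal H\times\mathcal H}$ with positive diagonal; connected means $W$ irreducible, undirected means $W=W^\top$. System states: $\mathcal X=\{\mathbf x\in\mathbb R_+^{\mathcal A\times\mathcal H}:\mathbf 1^\top\mathbf x=\boldsymbol\eta^\top\}$. An imitation mechanism is a Lipschitz map $\mathbf f:\mathcal Y\to\mathbb R_+^{\mathcal A\times\mathcal A}$. Network imitation dynamics: $$\dot x_{ih}=\sum_{j\in\mathcal A}\sum_{k\in\mathcal H}\big(x_{jh}W_{hk}x_{ik}f_{ji}(\mathbf x\mathbf 1)-x_{ih}W_{hk}x_{jk}f_{ij}(\mathbf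 x\mathbf 1)\big).$$ Assumption 1: $\operatorname{sgn}(f_{ij}(\mathbf y)-f_{ji}(\mathbf y))=\operatorname{sgn}(r_j(\mathbf y)-r_i(\mathbf y))$ for all $i,j,\mathbf y$. $\mathcal Y^\bullet=\{\mathbf y\in\mathcal Y: y_i>0,y_j>0\Rightarrow r_i(\mathbf y)=r_j(\mathbf y)\}$, $\mathcal X^\bullet=\{\mathbf x\in\mathcal X:\mathbf x\mathbf 1\in\mathcal Y^\bullet\}$. *)

From HB Require Import structures.
From mathcomp Require Import all_boot all_order all_algebra.
From mathcomp Require Import all_classical all_reals topology normedtype derive.
Set Implicit Arguments. Unset Strict Implicit. Unset Printing Implicit Defensive.
Import Order.TTheory GRing.Theory Num.Theory.
Import numFieldNormedType.Exports.
Local Open Scope classical_set_scope.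
Local Open Scope ring_scope.

Section Defs.
Variables (R : realType) (A H : finType).

Definition in_simplex (y : A -> R) : Prop :=
  (forall i, 0 <= y i) /\ \sum_(i : A) y i = 1.

Definition community_network (eta : H -> R) (W : H -> H -> R) : Prop :=
  (forall h, 0 < eta h) /\ \sum_(h : H) eta h = 1 /\
  (forall h k, 0 <= W h k) /\ (forall h, 0 < W h h).

Definition undirected (W : H -> H -> R) : Prop := forall h k, W h k = W k h.

Definition connected_net (W : H -> H -> R) : Prop :=
  forall h k, connect (fun a b => 0 < W a b) h k.

Definition in_states (eta : H -> R) (x : A -> H -> R) : Prop :=
  (forall i h, 0 <= x i h) /\ (forall h, \sum_(i : A) x i h = eta h).

Definition agg (x : A -> H -> R) : A -> R := fun i => \sum_(h : H) x i h.

Definition imitation_mechanism (f : (A -> R) -> A -> A -> R) : Prop :=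
  (forall y, in_simplex y -> forall i j, 0 <= f y i j) /\
  exists L : R, forall y y', in_simplex y -> in_simplex y' ->
    forall i j, `|f y i j - f y' i j| <= L * \sum_(k : A) `|y k - y' k|.

Definition assumption1 (r : (A -> R) -> A -> R) (f : (A -> R) -> A -> A -> R)
  : Prop :=
  forall i j y, in_simplex y -> Num.sg (f y i j - f y j i) = Num.sg (r y j - r y i).

Definition in_Ybullet (r : (A -> R) -> A -> R) (y : A -> R) : Prop :=
  in_simplex y /\ forall i j, 0 < y i -> 0 < y j -> r y i = r y j.

Definition in_Xbullet (r : (A -> R) -> A -> R) (eta : H -> R) (x : A -> H -> R)
  : Prop := in_states eta x /\ in_Ybullet r (agg x).

Definition imitation_field (W : H -> H -> R) (f : (A -> R) -> A -> A -> R)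
  (x : A -> H -> R) (i : A) (h : H) : R :=
  \sum_(j : A) \sum_(k : H)
    (x j h * W h k * x i k * f (agg x) j i - x i h * W h k * x j k * f (agg x) i j).

Definition is_solution (eta : H -> R) (W : H -> H -> R)
  (f : (A -> R) -> A -> A -> R) (x : R -> A -> H -> R) : Prop :=
  (forall t : R, 0 <= t -> in_states eta (x t)) /\
  (forall i h, (fun s => x s i h) @ at_right (0 : R) --> x 0 i h) /\
  (forall t : R, 0 < t -> forall i h,
      is_derive t (1 : R) (fun s => x s i h) (imitation_field W f (x t) i h)).

End Defs.

From HB Require Import structures.
From mathcomp Require Import all_boot all_order all_algebra.
From mathcomp Require Import all_classical all_reals topology normedtype sequences derive exp realfun.
From mathcomp Require Import ring lra.
Set Implicit Arguments. Unset Strict Implicit. Unset Printing Implicit Defensive.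
Import Order.TTheory GRing.Theory Num.Theory.
Import numFieldNormedType.Exports.
Local Open Scope classical_set_scope.
Local Open Scope ring_scope.

(* The solution is not assumed unique, so we argue by a Gronwall estimate
   rather than by exhibiting a stationary solution.  Let V(x) be the l1
   distance from agg x to y0.  On an undirected network, the velocity of
   agg x is a sum of terms x_ih W_hk x_jk (f_ji - f_ij) (aggregate_field).
   Each such term is O(V(x)) (flux_term_le): if y0_i = 0 or y0_j = 0, the
   corresponding share is at most V(x); otherwise Assumption 1 makes
   f_ji(y0) = f_ij(y0), and the Lipschitz property bounds the imbalance at
   agg x.  Hence D(t) = ||agg x(t) - y0||_2^2 satisfies D' <= c D with
   D(0) = 0, and Gronwall's lemma (gronwall_zero) gives D = 0. *)

Section Calculus.
Variable R : realType.

Lemma is_derive_fsum (I : finType) (F : I -> R -> R) (dF : I -> R) (t : R) :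
  (forall i, is_derive t 1 (F i) (dF i)) ->
  is_derive t 1 (fun s => \sum_(i : I) F i s) (\sum_(i : I) dF i).
Proof.
move=> hF; have -> : (fun s => \sum_(i : I) F i s) = \sum_(i : I) F i.
  by apply/funext => s; rewrite fct_sumE.
by elim/big_ind2 : _ => // *; [exact: is_derive_cst | exact: is_deriveD].
Qed.

Lemma cvg_at_right_fsum (I : finType) (F : I -> R -> R) (l : I -> R) (a : R) :
  (forall i, F i @ a^'+ --> l i) ->
  (fun s => \sum_(i : I) F i s) @ a^'+ --> \sum_(i : I) l i.
Proof.
move=> hF; have -> : (fun s => \sum_(i : I) F i s) = \sum_(i : I) F i.
  by apply/funext => s; rewrite fct_sumE.
by elim/big_ind2 : _ => // *; [exact: cvg_cst | exact: cvgD].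
Qed.

Lemma is_derive_expR_scale (c s : R) :
  is_derive s 1 (fun u => expR (c * u)) (expR (c * s) * c).
Proof.
have -> : (fun u => expR (c * u)) = expR \o (fun u => c *: u) by [].
apply: is_derive1_comp; apply: is_derive_eq.
by rewrite /GRing.scale /= mulr1.
Qed.

Lemma is_derive_le0_nonincr (g dg : R -> R) (a b : R) : a <= b ->
  {within `[a, b], continuous g} ->
  (forall s : R, a < s < b -> is_derive s 1 g (dg s) /\ dg s <= 0) -> g b <= g a.
Proof.
move=> ab g_cont hg.
apply: (ler0_derive1_le_cc _ _ g_cont); rewrite ?in_itv /= ?lexx ?ab //.
- by move=> s; rewrite in_itv /= => /hg[g' _]; exact: ex_derive.
- by move=> s; rewrite in_itv /= => /hg[g' g'_le0]; rewrite derive1E derive_val.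
Qed.

(* Gronwall's lemma with zero initial datum: a nonnegative function that
   vanishes at 0, is right-continuous there and satisfies D' <= c D on
   (0, +oo) vanishes on [0, +oo).  One shows that exp(-c s) D(s) decreases. *)
Lemma gronwall_zero (D dD : R -> R) (c : R) :
  (forall s : R, 0 <= s -> 0 <= D s) -> D 0 = 0 -> D @ 0^'+ --> D 0 ->
  (forall s : R, 0 < s -> is_derive s 1 D (dD s)) ->
  (forall s : R, 0 < s -> dD s <= c * D s) ->
  forall T : R, 0 <= T -> D T = 0.
Proof.
move=> D_ge0 D0 D_cvg0 D' D'_le T; rewrite le_eqVlt => /predU1P[<-//|T_gt0].
pose e (s : R) := expR (- c * s).
pose g (s : R) := e s * D s.
pose dg (s : R) := e s * dD s + D s * (e s * - c).
have e' (s : R) : is_derive s 1 e (e s * - c) := is_derive_expR_scale (- c) s.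
have g' (s : R) : 0 < s -> is_derive s 1 g (dg s).
  move=> s_gt0; apply: is_derive_eq; first exact: is_deriveM (e' s) (D' s s_gt0).
  by rewrite /dg /GRing.scale /=.
have g_cont : {within `[0, T], continuous g}.
  apply/continuous_within_itvP => //; split.
  - move=> s; rewrite in_itv /= => /andP[s_gt0 _].
    by apply: differentiable_continuous; rewrite -derivable1_diffP; case: (g' s s_gt0).
  - apply: cvgM; last exact: D_cvg0.
    apply: cvg_at_right_filter; apply: differentiable_continuous.
    by rewrite -derivable1_diffP; case: (e' 0).
  - apply: cvg_at_left_filter; apply: differentiable_continuous.
    by rewrite -derivable1_diffP; case: (g' T T_gt0).
have gT_le : g T <= g 0.
  apply: (is_derive_le0_nonincr (ltW T_gt0) g_cont) => s /andP[s_gt0 _].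
  split; first exact: g' s s_gt0.
  have := D'_le s s_gt0; have := expR_gt0 (- c * s); rewrite /dg /e; nra.
move: gT_le; rewrite /g /e D0 mulr0 => gT_le.
have := expR_gt0 (- c * T); have := D_ge0 T (ltW T_gt0).
by move=> DT_ge0 e_gt0; apply: le_anti; apply/andP; split; nra.
Qed.

End Calculus.

Section SquaredDistance.
Variables (R : realType) (A : finType).

Definition dist1 (y y' : A -> R) : R := \sum_k `|y k - y' k|.
Definition sqdist (y y' : A -> R) : R := \sum_k (y k - y' k) ^+ 2.

Lemma dist1_ge0 (y y' : A -> R) : 0 <= dist1 y y'.
Proof. by apply: sumr_ge0 => k _. Qed.

Lemma sqdist_ge0 (y y' : A -> R) : 0 <= sqdist y y'.
Proof. by apply: sumr_ge0 => k _; exact: sqr_ge0. Qed.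

Lemma sqdist_refl (y : A -> R) : sqdist y y = 0.
Proof. by apply: big1 => k _; rewrite subrr expr0n. Qed.

Lemma sqdist_eq0 (y y' : A -> R) : sqdist y y' = 0 -> y = y'.
Proof.
move=> /psumr_eq0P y_eq; apply/funext => k.
have /eqP : (y k - y' k) ^+ 2 = 0 by apply: y_eq => // j _; exact: sqr_ge0.
by rewrite sqrf_eq0 subr_eq0 => /eqP.
Qed.

Lemma mul_le_sqrD (u v : R) : 0 <= u -> 0 <= v -> u * v <= u ^+ 2 + v ^+ 2.
Proof. by move=> u_ge0 v_ge0; have := sqr_ge0 (u - v); nra. Qed.

Lemma dist1_sqr_le (y y' : A -> R) : dist1 y y' ^+ 2 <= 2 * #|A|%:R * sqdist y y'.
Proof.
rewrite /dist1 /sqdist expr2 mulr_suml.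
pose u k := (y k - y' k) ^+ 2.
apply: (le_trans (y := \sum_i \sum_(j : A) (u i + u j))).
  apply: ler_sum => i _; rewrite mulr_sumr; apply: ler_sum => j _.
  rewrite /u -(real_normK (num_real (y i - y' i))) -(real_normK (num_real (y j - y' j))).
  exact: mul_le_sqrD.
have card_A : #|(fun _ : A => true)| = #|A| by apply: eq_card.
under eq_bigr do rewrite big_split /= sumr_const card_A.
rewrite big_split /= sumrMnl sumr_const card_A -mulrnDr -[X in X <= _]mulr_natl natrD.
by rewrite le_eqVlt; apply/orP; left; apply/eqP; rewrite /u; ring.
Qed.

Lemma sqdist_derive (y : R -> A -> R) (dy y0 : A -> R) (t : R) :
  (forall i, is_derive t 1 (fun s => y s i) (dy i)) ->
  is_derive t 1 (fun s => sqdist (y s) y0) (\sum_i 2 * (y t i - y0 i) * dy i).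
Proof.
move=> y'; apply: (is_derive_fsum (F := fun i s => (y s i - y0 i) ^+ 2)) => i.
have -> : (fun s => (y s i - y0 i) ^+ 2) =
    (fun s => y s i - y0 i) * (fun s => y s i - y0 i).
  by apply/funext => s; rewrite expr2.
(* the component derivatives are found by instance resolution from y' and yi' *)
have yi' : is_derive t 1 (fun s => y s i - y0 i) (dy i).
  by apply: is_derive_eq; rewrite subr0.
by apply: is_derive_eq; rewrite /GRing.scale /=; ring.
Qed.

Lemma sqdist_cvg_at_right (y : R -> A -> R) (y0 : A -> R) (a : R) :
  (forall i, (fun s => y s i) @ a^'+ --> y a i) ->
  (fun s => sqdist (y s) y0) @ a^'+ --> sqdist (y a) y0.
Proof.
move=> y_cvg; apply: (cvg_at_right_fsum (F := fun i s => (y s i - y0 i) ^+ 2)) => i.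
have yi_cvg : (fun s => y s i - y0 i) @ a^'+ --> y a i - y0 i.
  exact: cvgB (y_cvg i) (cvg_cst _).
by rewrite expr2; apply: cvgM.
Qed.

Lemma sqdist_dissipation (y y0 dy : A -> R) (K : R) : 0 <= K ->
  (forall i, `|dy i| <= K * dist1 y y0) ->
  \sum_i 2 * (y i - y0 i) * dy i <= 4 * K * #|A|%:R * sqdist y y0.
Proof.
move=> K_ge0 dy_le.
apply: (le_trans (y := \sum_i 2 * `|y i - y0 i| * (K * dist1 y y0))).
  apply: ler_sum => i _; rewrite -!mulrA; apply: ler_wpM2l => //.
  apply: (le_trans (ler_norm _)); rewrite normrM.
  by apply: ler_wpM2l => //; exact: dy_le.
have -> : \sum_i 2 * `|y i - y0 i| * (K * dist1 y y0) = 2 * K * dist1 y y0 ^+ 2.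
  by rewrite -mulr_suml -mulr_sumr /dist1; ring.
have -> : 4 * K * #|A|%:R * sqdist y y0 = 2 * K * (2 * #|A|%:R * sqdist y y0) by ring.
by apply: ler_wpM2l; [exact: mulr_ge0 | exact: dist1_sqr_le].
Qed.

End SquaredDistance.

Section ImitationEstimates.
Variables (R : realType) (A H : finType).

Lemma ler_sum_term (I : finType) (F : I -> R) (i : I) :
  (forall j, 0 <= F j) -> F i <= \sum_j F j.
Proof. by move=> F_ge0; rewrite (bigD1 i) //= lerDl; apply: sumr_ge0. Qed.

Definition lipschitz_on_simplex (f : (A -> R) -> A -> A -> R) (L : R) : Prop :=
  forall y y', in_simplex y -> in_simplex y' ->
    forall i j, `|f y i j - f y' i j| <= L * dist1 y y'.

Lemma agg_simplex (eta : H -> R) (x : A -> H -> R) :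
  \sum_h eta h = 1 -> in_states eta x -> in_simplex (agg x).
Proof.
move=> eta1 [x_ge0 x_sum]; split=> [i|]; first by apply: sumr_ge0.
by rewrite /agg exchange_big /= -eta1; apply: eq_bigr => h _; exact: x_sum.
Qed.

Lemma state_le_agg (eta : H -> R) (x : A -> H -> R) i h :
  in_states eta x -> x i h <= agg x i.
Proof. by move=> [x_ge0 _]; apply: (ler_sum_term (F := x i)). Qed.

Lemma simplex_le1 (y : A -> R) i : in_simplex y -> y i <= 1.
Proof. by move=> [y_ge0 <-]; exact: ler_sum_term. Qed.

Lemma simplex_dist1_le2 (y y' : A -> R) :
  in_simplex y -> in_simplex y' -> dist1 y y' <= 2.
Proof.
move=> [y_ge0 y1] [y'_ge0 y'1].
apply: (le_trans (y := \sum_k (y k + y' k))); last by rewrite big_split /= y1 y'1.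
apply: ler_sum => k _; apply: (le_trans (ler_normB _ _)).
by rewrite !ger0_norm.
Qed.

Lemma lipschitz_bounded (f : (A -> R) -> A -> A -> R) (L : R) (y0 : A -> R) :
  in_simplex y0 -> lipschitz_on_simplex f L ->
  exists2 M, 0 <= M & forall y, in_simplex y -> forall i j, `|f y i j| <= M.
Proof.
move=> y0_simplex f_lip.
have norm_le i j : `|f y0 i j| <= \sum_a \sum_b `|f y0 a b|.
  apply: (le_trans (ler_sum_term (F := fun b => `|f y0 i b|) j _)) => //.
  by apply: (ler_sum_term (F := fun a => \sum_b `|f y0 a b|)) => a; apply: sumr_ge0.
exists (\sum_a \sum_b `|f y0 a b| + 2 * `|L|).
  by apply: addr_ge0; [do 2 (apply: sumr_ge0 => ? _) | apply: mulr_ge0].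
move=> y y_simplex i j.
have dist_le := simplex_dist1_le2 y_simplex y0_simplex.
have lip := f_lip _ _ y_simplex y0_simplex i j.
have L_le : L * dist1 y y0 <= `|L| * 2.
  by apply: (le_trans (ler_wpM2r (dist1_ge0 _ _) (ler_norm L))); apply: ler_wpM2l.
have := norm_le i j; have := ler_normD (f y i j - f y0 i j) (f y0 i j).
rewrite subrK; lra.
Qed.

Lemma Ybullet_balanced (r : (A -> R) -> A -> R) (f : (A -> R) -> A -> A -> R)
    (y0 : A -> R) i j :
  assumption1 r f -> in_Ybullet r y0 -> 0 < y0 i -> 0 < y0 j ->
  f y0 j i = f y0 i j.
Proof.
move=> hA [y0_simplex y0_rest] yi_gt0 yj_gt0.
have := hA j i y0 y0_simplex; rewrite (y0_rest i j yi_gt0 yj_gt0) subrr sgr0.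
by move/eqP; rewrite sgr_eq0 subr_eq0 => /eqP.
Qed.

Lemma imbalance_le_dist (f : (A -> R) -> A -> A -> R) (L : R) (y y0 : A -> R) i j :
  lipschitz_on_simplex f L -> in_simplex y -> in_simplex y0 ->
  f y0 j i = f y0 i j -> `|f y j i - f y i j| <= 2 * `|L| * dist1 y y0.
Proof.
move=> f_lip y_simplex y0_simplex balanced.
have -> : f y j i - f y i j = (f y j i - f y0 j i) - (f y i j - f y0 i j).
  by rewrite balanced; ring.
apply: (le_trans (ler_normB _ _)).
have L_le : L * dist1 y y0 <= `|L| * dist1 y y0.
  by apply: ler_wpM2r; [exact: dist1_ge0 | exact: ler_norm].
have := f_lip _ _ y_simplex y0_simplex j i; have := f_lip _ _ y_simplex y0_simplex i j.
lra.
Qed.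

Lemma unused_share_le_dist (eta : H -> R) (x : A -> H -> R) (y0 : A -> R) a h :
  in_states eta x -> y0 a = 0 -> x a h <= dist1 (agg x) y0.
Proof.
move=> x_state ya0; apply: (le_trans (state_le_agg a h x_state)).
apply: (le_trans _ (ler_sum_term (F := fun k => `|agg x k - y0 k|) a _)) => //.
by rewrite ya0 subr0 ler_norm.
Qed.

Lemma share_product_le (p q d V M B : R) :
  0 <= p <= 1 -> 0 <= q <= 1 -> 0 <= d <= 2 * M -> 0 <= V -> 0 <= B ->
  [\/ p <= V, q <= V | d <= B * V] -> p * q * d <= (2 * M + B) * V.
Proof.
move=> /andP[p_ge0 p_le1] /andP[q_ge0 q_le1] /andP[d_ge0 d_le] V_ge0 B_ge0.
have pq_ge0 : 0 <= p * q by exact: mulr_ge0.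
have BV_ge0 : 0 <= B * V by exact: mulr_ge0.
case=> [p_le | q_le | d_le'].
- have pq_le : p * q <= V by rewrite -[V]mulr1; exact: ler_pM.
  by have := ler_pM pq_ge0 d_ge0 pq_le d_le; nra.
- have pq_le : p * q <= V by rewrite -[V]mul1r; exact: ler_pM.
  by have := ler_pM pq_ge0 d_ge0 pq_le d_le; nra.
- have pq_le1 : p * q <= 1 by rewrite -[1]mulr1; exact: ler_pM.
  by have := ler_pM pq_ge0 d_ge0 pq_le1 d_le'; nra.
Qed.

Lemma flux_term_le (r : (A -> R) -> A -> R) (eta : H -> R)
    (f : (A -> R) -> A -> A -> R) (L M : R) (y0 : A -> R) (x : A -> H -> R) i j h k :
  \sum_h eta h = 1 -> assumption1 r f -> lipschitz_on_simplex f L ->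
  (forall y, in_simplex y -> forall a b, `|f y a b| <= M) ->
  in_Ybullet r y0 -> in_states eta x ->
  x i h * x j k * `|f (agg x) j i - f (agg x) i j|
    <= (2 * M + 2 * `|L|) * dist1 (agg x) y0.
Proof.
move=> eta1 hA f_lip f_bnd y0_bullet x_state.
have y_simplex := agg_simplex eta1 x_state.
have share_range a c : 0 <= x a c <= 1.
  rewrite x_state.1 /=; apply: le_trans (state_le_agg a c x_state) _.
  exact: simplex_le1.
apply: share_product_le => //; rewrite ?dist1_ge0 ?mulr_ge0 //.
  rewrite normr_ge0 /=; apply: (le_trans (ler_normB _ _)).
  by have := f_bnd _ y_simplex j i; have := f_bnd _ y_simplex i j; lra.
have [yi_gt0 | yi_le0] := ltP 0 (y0 i); last first.
  apply: Or31; apply: unused_share_le_dist x_state _.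
  by apply: le_anti; rewrite yi_le0 (y0_bullet.1.1 i).
have [yj_gt0 | yj_le0] := ltP 0 (y0 j); last first.
  apply: Or32; apply: unused_share_le_dist x_state _.
  by apply: le_anti; rewrite yj_le0 (y0_bullet.1.1 j).
apply: Or33; apply: imbalance_le_dist f_lip y_simplex y0_bullet.1 _.
exact: Ybullet_balanced hA y0_bullet yi_gt0 yj_gt0.
Qed.

(* On an undirected network the aggregate velocity of strategy i is a sum of
   pairwise imbalances: mass moved from h to k is matched by mass moved from
   k to h, and only the difference of imitation rates survives. *)
Lemma aggregate_field (W : H -> H -> R) (f : (A -> R) -> A -> A -> R)
    (x : A -> H -> R) i :
  undirected W ->
  \sum_h imitation_field W f x i h =
  \sum_j \sum_h \sum_k x i h * W h k * x j k * (f (agg x) j i - f (agg x) i j).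
Proof.
move=> W_sym; rewrite /imitation_field exchange_big /=; apply: eq_bigr => j _.
under eq_bigr do rewrite sumrB.
rewrite sumrB [X in X - _]exchange_big /= -sumrB; apply: eq_bigr => h _.
by rewrite -sumrB; apply: eq_bigr => k _; rewrite (W_sym k h); ring.
Qed.

Lemma aggregate_field_le (r : (A -> R) -> A -> R) (eta : H -> R) (W : H -> H -> R)
    (f : (A -> R) -> A -> A -> R) (L M : R) (y0 : A -> R) (x : A -> H -> R) i :
  \sum_h eta h = 1 -> (forall h k, 0 <= W h k) -> undirected W ->
  assumption1 r f -> lipschitz_on_simplex f L ->
  (forall y, in_simplex y -> forall a b, `|f y a b| <= M) ->
  in_Ybullet r y0 -> in_states eta x ->
  `|\sum_h imitation_field W f x i h|
    <= (\sum_(j : A) \sum_h \sum_k W h k) * (2 * M + 2 * `|L|) * dist1 (agg x) y0.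
Proof.
move=> eta1 W_ge0 W_sym hA f_lip f_bnd y0_bullet x_state.
rewrite aggregate_field // -mulrA !mulr_suml.
apply: (le_trans (ler_norm_sum _ _ _)); apply: ler_sum => j _.
apply: (le_trans (ler_norm_sum _ _ _)); apply: ler_sum => h _.
rewrite mulr_suml; apply: (le_trans (ler_norm_sum _ _ _)); apply: ler_sum => k _.
have [x_ge0 _] := x_state.
rewrite -mulrA (mulrC (x i h)) -!mulrA !normrM (ger0_norm (W_ge0 h k)).
rewrite (ger0_norm (x_ge0 i h)) (ger0_norm (x_ge0 j k)) [x i h * _]mulrA.
apply: ler_wpM2l => //.
exact: flux_term_le eta1 hA f_lip f_bnd y0_bullet x_state.
Qed.

End ImitationEstimates.

Section Solutions.
Variables (R : realType) (A H : finType).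
Variables (eta : H -> R) (W : H -> H -> R) (f : (A -> R) -> A -> A -> R).
Variable x : R -> A -> H -> R.
Hypothesis x_solution : is_solution eta W f x.

Lemma solution_agg_cvg0 i : (fun s => agg (x s) i) @ 0^'+ --> agg (x 0) i.
Proof.
have [_ [x_cvg0 _]] := x_solution.
exact: (cvg_at_right_fsum (F := fun h s => x s i h)).
Qed.

Lemma solution_agg_derive (t : R) i : 0 < t ->
  is_derive t 1 (fun s => agg (x s) i) (\sum_h imitation_field W f (x t) i h).
Proof.
have [_ [_ x_derive]] := x_solution.
by move=> t_gt0; apply: (is_derive_fsum (F := fun h s => x s i h)) => h; exact: x_derive.
Qed.

End Solutions.

Theorem proposition2 (R : realType) (A H : finType)
  (r : (A -> R) -> A -> R) (eta : H -> R) (W : H -> H -> R)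
  (f : (A -> R) -> A -> A -> R) (x : R -> A -> H -> R) :
  community_network eta W -> undirected W -> connected_net W ->
  imitation_mechanism f -> assumption1 r f ->
  is_solution eta W f x -> in_Xbullet r eta (x 0) ->
  (forall t, 0 <= t -> agg (x t) = agg (x 0)) /\
  (forall t, 0 <= t -> in_Xbullet r eta (x t)).
Proof.
move=> [_ [eta1 [W_ge0 _]]] W_sym _ [_ [L f_lip]] hA x_sol [_ y0_bullet].
have [x_state _] := x_sol.
set y0 := agg (x 0).
have [M M_ge0 f_bnd] := lipschitz_bounded y0_bullet.1 f_lip.
set K := (\sum_(j : A) \sum_h \sum_k W h k) * (2 * M + 2 * `|L|).
have K_ge0 : 0 <= K.
  by apply: mulr_ge0; [do 3 (apply: sumr_ge0 => ? _) | apply: addr_ge0; apply: mulr_ge0].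
have sqdist_zero : forall t, 0 <= t -> sqdist (agg (x t)) y0 = 0.
  apply: (gronwall_zero (c := 4 * K * #|A|%:R)).
  - by move=> s _; exact: sqdist_ge0.
  - exact: sqdist_refl.
  - by apply: sqdist_cvg_at_right => i; exact: solution_agg_cvg0 x_sol i.
  - move=> s s_gt0.
    apply: (sqdist_derive (dy := fun i => \sum_h imitation_field W f (x s) i h)) => i.
    by move: (solution_agg_derive x_sol i s_gt0).
  - move=> s s_gt0; apply: sqdist_dissipation K_ge0 _ => i.
    exact: aggregate_field_le eta1 W_ge0 W_sym hA f_lip f_bnd y0_bullet (x_state s (ltW s_gt0)).
have agg_const t : 0 <= t -> agg (x t) = y0 by move=> /sqdist_zero/sqdist_eq0.
split=> // t t_ge0; split; first exact: x_state.
by rewrite agg_const.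
Qed.
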